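(* Let $(V,\|\cdot\|)$ be a normed plane and $x,y\in V$ distinct. The segment $[xy]$ is not parallel to any nondegenerate segment contained in the unit circle $S$ if and only if for every $z\in\mathrm{bis}(x,y)\setminus[xy]$, the bisector $\mathrm{bis}(x,y)$ is contained in $C_z\cup(2z-C_z)$, where $C_z=\mathrm{conv}\big([zx\rangle\cup[zy\rangle\big)$ and $2z-C_z=\{2z-v:v\in C_z\}$ is the image of $C_z$ under the point reflection through $z$.
   Context: A normed (Minkowski) plane $(V,\|\cdot\|)$ is a two-dimensional real vector space with a norm; $S=\{v:\|v\|=1\}$ is its unit circle. For $x,y\in V$, $[xy]$ denotes the closed segment and $[xy\rangle$ the closed half-line starting at $x$ and passing through $y$. For distinct $x,y\in V$ the bisector is $\mathrm{bis}(x,y)=\{z\in V:\|z-x\|=\|z-y\|\}$. *)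

(* classical reals.  A normed plane is modelled as R^2 = R*R
   equipped with an arbitrary norm N (every 2-dimensional real normed space
   is linearly isometric to such a (R^2, N)). *)
From Stdlib Require Import Reals.
Open Scope R_scope.

Definition V : Type := (R * R)%type.

Definition vadd (u v : V) : V := (fst u + fst v, snd u + snd v).
Definition vscal (a : R) (u : V) : V := (a * fst u, a * snd u).
Definition vsub (u v : V) : V := (fst u - fst v, snd u - snd v).
Definition vzero : V := (0, 0).

Definition is_norm (N : V -> R) : Prop :=
  (forall u, N u = 0 -> u = vzero) /\
  (forall a u, N (vscal a u) = Rabs a * N u) /\
  (forall u v, N (vadd u v) <= N u + N v).

Definition unit_circle (N : V -> R) (v : V) : Prop := N v = 1.

Definition segment (x y : V) (p : V) : Prop :=
  exists t, 0 <= t <= 1 /\ p = vadd x (vscal t (vsub y x)).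

Definition halfline (x y : V) (p : V) : Prop :=
  exists t, 0 <= t /\ p = vadd x (vscal t (vsub y x)).

Definition bis (N : V -> R) (x y : V) (z : V) : Prop :=
  N (vsub z x) = N (vsub z y).

Definition convex (A : V -> Prop) : Prop :=
  forall u v t, A u -> A v -> 0 <= t <= 1 -> A (vadd u (vscal t (vsub v u))).

Definition conv (A : V -> Prop) (p : V) : Prop :=
  forall C : V -> Prop, convex C -> (forall q, A q -> C q) -> C p.

Definition Cz (x y z : V) : V -> Prop :=
  conv (fun p => halfline z x p \/ halfline z y p).

Definition reflCz (x y z : V) (p : V) : Prop :=
  exists v, Cz x y z v /\ p = vsub (vscal 2 z) v.

Definition parallel_seg (a b c d : V) : Prop :=
  exists l : R, vsub d c = vscal l (vsub b a).

Definition parallel_to_seg_in_S (N : V -> R) (x y : V) : Prop :=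
  exists u v : V, u <> v /\ (forall p, segment u v p -> unit_circle N p) /\
    parallel_seg x y u v.

(* Write [p = z - x], [q = z - y] and [w = z + al p + be q]; when [z] lies on the
   bisector but off [xy], [p] and [q] are independent, [C_z] is the quadrant
   [al, be <= 0] and [2z - C_z] the quadrant [al, be >= 0].  If [w] is on the
   bisector with [al < 0 < be], the four vectors [p], [q], [w - x], [w - y] lie on
   two lines of direction [y - x] and have pairwise equal norms on each line;
   convexity of the norm along these lines then forces it to be constant on a
   nondegenerate segment of direction [y - x], which rescales into [S].
   Conversely, a segment [[u, u + l (y - x)]] in [S] yields the bisector points
   [z = x - (2/l) u] and [w = z + x - y], and [w] has mixed coordinates. *)

From Stdlib Require Import Reals Lra.
Open Scope R_scope.

Definition cross (u v : V) : R := fst u * snd v - snd u * fst v.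

Ltac destruct_vectors :=
  repeat match goal with v : V |- _ => destruct v | v : (R * R)%type |- _ => destruct v end.

Ltac vec_eq :=
  destruct_vectors; unfold vadd, vscal, vsub, vzero; simpl; f_equal; field; try lra.

Ltac cross_field :=
  destruct_vectors; unfold cross, vadd, vscal, vsub in *; simpl in *; field; auto.

Lemma vsub_eq_vadd (u v d : V) : vsub v u = d -> v = vadd u d.
Proof. intros <-; vec_eq. Qed.

Lemma vsub_neq0 (x y : V) : x <> y -> vsub x y <> vzero.
Proof.
  intros Hxy E; apply Hxy; destruct x, y; unfold vsub, vzero in E; simpl in E.
  injection E; intros; f_equal; lra.
Qed.

Lemma Rabs_eq_shift (a l : R) : l <> 0 -> Rabs a = Rabs (a + l) -> a = - l / 2.
Proof.
  intros Hl; unfold Rabs; destruct (Rcase_abs a), (Rcase_abs (a + l)); intros; lra.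
Qed.

Lemma cross_eq0_scal (u e : V) : e <> vzero -> cross u e = 0 -> exists k, u = vscal k e.
Proof.
  destruct u as [u1 u2], e as [e1 e2]; unfold cross, vscal, vzero; simpl; intros He H.
  destruct (Req_dec e1 0) as [E1|E1].
  - subst e1. assert (e2 <> 0) by (intros ->; auto).
    exists (u2 / e2). f_equal; [|field; auto].
    assert (u1 * e2 = 0) as U by lra.
    destruct (Rmult_integral _ _ U); [subst; ring | contradiction].
  - exists (u1 / e1). f_equal; [field; auto|].
    apply Rmult_eq_reg_r with e1; auto. field_simplify; auto. lra.
Qed.

Lemma cross_coords (p q z w : V) : cross p q <> 0 ->
  w = vadd z (vadd (vscal (cross (vsub w z) q / cross p q) p)
                   (vscal (cross p (vsub w z) / cross p q) q)).
Proof.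
  destruct p, q, z, w; unfold cross, vadd, vscal, vsub; simpl; intros H.
  f_equal; field; auto.
Qed.

Lemma segment_cross (x y z : V) : segment x y z -> cross (vsub z x) (vsub z y) = 0.
Proof. intros [t [_ ->]]; destruct x, y; unfold cross, vadd, vscal, vsub; simpl; ring. Qed.

Lemma conv_affine_le (A : V -> Prop) (f : V -> R) (p : V) :
  (forall u v t, f (vadd u (vscal t (vsub v u))) = f u + t * (f v - f u)) ->
  (forall q, A q -> f q <= 0) -> conv A p -> f p <= 0.
Proof.
  intros Hf HA Hp. apply (Hp (fun q => f q <= 0)); auto.
  intros u v t Hu Hv Ht. rewrite Hf. nra.
Qed.

Lemma Cz_iff_coords_nonpos (x y z w : V) (al be : R) :
  cross (vsub z x) (vsub z y) <> 0 ->
  w = vadd z (vadd (vscal al (vsub z x)) (vscal be (vsub z y))) ->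
  Cz x y z w <-> al <= 0 /\ be <= 0.
Proof.
  intros Hpq Hw. set (D := cross (vsub z x) (vsub z y)).
  split.
  - intros HC. split.
    + replace al with (cross (vsub w z) (vsub z y) / D) by (subst w D; cross_field).
      refine (conv_affine_le _ (fun P => cross (vsub P z) (vsub z y) / D) w _ _ HC).
      * intros; subst D; cross_field.
      * intros P [[t [Ht ->]] | [t [Ht ->]]].
        -- replace (cross _ _ / D) with (- t) by (subst D; cross_field). lra.
        -- replace (cross _ _ / D) with 0 by (subst D; cross_field). lra.
    + replace be with (cross (vsub z x) (vsub w z) / D) by (subst w D; cross_field).
      refine (conv_affine_le _ (fun P => cross (vsub z x) (vsub P z) / D) w _ _ HC).
      * intros; subst D; cross_field.
      * intros P [[t [Ht ->]] | [t [Ht ->]]].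
        -- replace (cross _ _ / D) with 0 by (subst D; cross_field). lra.
        -- replace (cross _ _ / D) with (- t) by (subst D; cross_field). lra.
  - intros [Hal Hbe] C HC Hsub.
    assert (Px : C (vadd z (vscal (-2 * al) (vsub x z))))
      by (apply Hsub; left; exists (-2 * al); split; [lra | reflexivity]).
    assert (Py : C (vadd z (vscal (-2 * be) (vsub y z))))
      by (apply Hsub; right; exists (-2 * be); split; [lra | reflexivity]).
    replace w with (vadd (vadd z (vscal (-2 * al) (vsub x z)))
                         (vscal (1 / 2) (vsub (vadd z (vscal (-2 * be) (vsub y z)))
                                              (vadd z (vscal (-2 * al) (vsub x z))))))
      by (subst w; vec_eq).
    apply HC; auto; lra.
Qed.

Lemma reflCz_iff_coords_nonneg (x y z w : V) (al be : R) :
  cross (vsub z x) (vsub z y) <> 0 ->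
  w = vadd z (vadd (vscal al (vsub z x)) (vscal be (vsub z y))) ->
  reflCz x y z w <-> 0 <= al /\ 0 <= be.
Proof.
  intros Hpq Hw.
  assert (Hv : vsub (vscal 2 z) w =
               vadd z (vadd (vscal (- al) (vsub z x)) (vscal (- be) (vsub z y))))
    by (subst w; vec_eq).
  split.
  - intros [v [HC Hwv]].
    assert (v = vsub (vscal 2 z) w) as -> by (rewrite Hwv; vec_eq).
    apply (Cz_iff_coords_nonpos x y z _ _ _ Hpq Hv) in HC; lra.
  - intros Hc. exists (vsub (vscal 2 z) w). split; [|vec_eq].
    apply (Cz_iff_coords_nonpos x y z _ _ _ Hpq Hv); lra.
Qed.

Section Norm.
Variable N : V -> R.
Hypothesis HN : is_norm N.

Lemma norm_eq0 (u : V) : N u = 0 -> u = vzero.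
Proof. apply HN. Qed.

Lemma norm_scal (a : R) (u : V) : N (vscal a u) = Rabs a * N u.
Proof. apply HN. Qed.

Lemma norm_triangle (u v : V) : N (vadd u v) <= N u + N v.
Proof. apply HN. Qed.

Lemma norm_scal_nonneg (a : R) (u : V) : 0 <= a -> N (vscal a u) = a * N u.
Proof. intros; rewrite norm_scal, Rabs_pos_eq; auto. Qed.

Lemma norm_opp (u : V) : N (vscal (-1) u) = N u.
Proof. rewrite norm_scal, (Rabs_left (-1)) by lra. ring. Qed.

Lemma norm_ge0 (u : V) : 0 <= N u.
Proof.
  pose proof (norm_triangle u (vscal (-1) u)) as H.
  replace (vadd u (vscal (-1) u)) with (vscal 0 u) in H by vec_eq.
  rewrite norm_opp, norm_scal, Rabs_R0 in H. lra.
Qed.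

Lemma norm_gt0 (u : V) : u <> vzero -> 0 < N u.
Proof.
  intros Hu; destruct (Rle_lt_or_eq_dec _ _ (norm_ge0 u)) as [|E]; auto.
  exfalso; apply Hu, norm_eq0; auto.
Qed.

Lemma norm_scal_inj (a b : R) (e : V) :
  e <> vzero -> N (vscal a e) = N (vscal b e) -> Rabs a = Rabs b.
Proof.
  intros He; rewrite !norm_scal; intros E.
  apply Rmult_eq_reg_r with (N e); auto. apply Rgt_not_eq, norm_gt0; auto.
Qed.

Lemma norm_line_convex (c e : V) (s t u : R) : s <= t <= u ->
  (u - s) * N (vadd c (vscal t e)) <=
  (u - t) * N (vadd c (vscal s e)) + (t - s) * N (vadd c (vscal u e)).
Proof.
  intros Ht.
  rewrite <- !norm_scal_nonneg by lra.
  replace (vscal (u - s) (vadd c (vscal t e))) with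
    (vadd (vscal (u - t) (vadd c (vscal s e))) (vscal (t - s) (vadd c (vscal u e))))
    by vec_eq.
  apply norm_triangle.
Qed.

Lemma norm_line_const (c e : V) (t1 t2 t3 rho : R) : t1 < t2 < t3 ->
  N (vadd c (vscal t1 e)) <= rho -> N (vadd c (vscal t3 e)) <= rho ->
  rho <= N (vadd c (vscal t2 e)) ->
  forall t, t1 <= t <= t3 -> N (vadd c (vscal t e)) = rho.
Proof.
  intros Ht H1 H3 H2 t Ht'.
  pose proof (norm_line_convex c e t1 t t3 Ht') as C.
  apply Rle_antisym; [nra|].
  destruct (Rle_or_lt t t2).
  - pose proof (norm_line_convex c e t t2 t3 ltac:(lra)). nra.
  - pose proof (norm_line_convex c e t1 t2 t ltac:(lra)). nra.
Qed.

Lemma flat_chord_parallel (x y c e : V) (k t1 t2 t3 rho : R) :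
  e = vscal k (vsub y x) -> e <> vzero -> t1 < t2 < t3 ->
  N (vadd c (vscal t1 e)) <= rho -> N (vadd c (vscal t3 e)) <= rho ->
  rho <= N (vadd c (vscal t2 e)) -> parallel_to_seg_in_S N x y.
Proof.
  intros Hk He Ht H1 H3 H2.
  pose proof (norm_line_const c e t1 t2 t3 rho Ht H1 H3 H2) as Hconst.
  remember (vadd c (vscal t1 e)) as a eqn:Ha.
  remember (vadd c (vscal t3 e)) as b eqn:Hb.
  assert (Hab : e = vscal (/ (t3 - t1)) (vsub b a)) by (subst a b; vec_eq).
  assert (Hrho : 0 < rho).
  { destruct (Rlt_or_le 0 rho) as [|Hr]; auto. exfalso; apply He.
    pose proof (norm_ge0 a); pose proof (norm_ge0 b).
    assert (a = vzero) as -> by (apply norm_eq0; lra).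
    assert (b = vzero) as -> by (apply norm_eq0; lra).
    rewrite Hab. vec_eq. }
  exists (vscal (/ rho) a), (vscal (/ rho) b). split; [|split].
  - intros E; apply He.
    rewrite Hab; replace (vsub b a) with (vscal rho (vsub (vscal (/ rho) b) (vscal (/ rho) a)))
      by vec_eq.
    rewrite E; vec_eq.
  - intros P [s [Hs ->]]. unfold unit_circle.
    replace (vadd (vscal (/ rho) a) (vscal s (vsub (vscal (/ rho) b) (vscal (/ rho) a))))
      with (vscal (/ rho) (vadd c (vscal (t1 + s * (t3 - t1)) e))) by (subst a b; vec_eq).
    rewrite norm_scal_nonneg, Hconst by (try apply Rlt_le, Rinv_0_lt_compat; nra).
    field; lra.
  - exists (/ rho * (t3 - t1) * k). subst a b e; vec_eq.
Qed.

(* Applied with [p = z - x] and [q = z - y], the two norms below are [N (w - x)] and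
   [N (w - y)] for [w = z - a p + b q]. *)
Lemma mixed_coords_parallel (x y p q : V) (k a b : R) :
  vsub q p = vscal k (vsub y x) -> vsub q p <> vzero -> N p = N q -> 0 < a -> 0 < b ->
  N (vadd (vscal (1 - a) p) (vscal b q)) = N (vadd (vscal (- a) p) (vscal (1 + b) q)) ->
  parallel_to_seg_in_S N x y.
Proof.
  intros Hk He Hpq Ha Hb Hw.
  pose proof (norm_ge0 p) as Hp0.
  destruct (Rle_or_lt a 1) as [Ha1|Ha1].
  - apply (flat_chord_parallel x y p (vsub q p) k 0 1 ((1 + b) / (1 + b - a)) (N p));
      auto.
    + split; [lra|]. apply Rmult_lt_reg_r with (1 + b - a); [lra|].
      field_simplify; lra.
    + replace (vadd p (vscal 0 (vsub q p))) with p by vec_eq. lra.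
    + replace (vadd p (vscal ((1 + b) / (1 + b - a)) (vsub q p)))
        with (vscal (/ (1 + b - a)) (vadd (vscal (- a) p) (vscal (1 + b) q))) by vec_eq.
      rewrite norm_scal_nonneg, <- Hw by (apply Rlt_le, Rinv_0_lt_compat; lra).
      pose proof (norm_triangle (vscal (1 - a) p) (vscal b q)) as T.
      rewrite !norm_scal_nonneg in T by lra.
      apply Rmult_le_reg_l with (1 + b - a); [lra|].
      rewrite <- Rmult_assoc, Rinv_r by lra. nra.
    + replace (vadd p (vscal 1 (vsub q p))) with q by vec_eq. lra.
  - set (c := vadd (vscal (1 - a) p) (vscal b q)) in *.
    apply (flat_chord_parallel x y c (vsub q p) k (1 - a) 0 1 (N c)); auto; try lra.
    + replace (vadd c (vscal (1 - a) (vsub q p))) with (vscal (1 - a + b) q)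
        by (subst c; vec_eq).
      pose proof (norm_triangle c (vscal (a - 1) p)) as T1.
      pose proof (norm_triangle (vscal b q) (vscal (-1) c)) as T2.
      replace (vadd c (vscal (a - 1) p)) with (vscal b q) in T1 by (subst c; vec_eq).
      replace (vadd (vscal b q) (vscal (-1) c)) with (vscal (a - 1) p) in T2
        by (subst c; vec_eq).
      rewrite norm_opp in T2.
      rewrite !norm_scal_nonneg in T1, T2 by lra.
      rewrite norm_scal; unfold Rabs; destruct (Rcase_abs (1 - a + b)); nra.
    + replace (vadd c (vscal 1 (vsub q p))) with (vadd (vscal (- a) p) (vscal (1 + b) q))
        by (subst c; vec_eq). lra.
    + replace (vadd c (vscal 0 (vsub q p))) with c by vec_eq. lra.
Qed.

Lemma bis_cross_neq0 (x y z : V) : x <> y -> bis N x y z -> ~ segment x y z ->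
  cross (vsub z x) (vsub z y) <> 0.
Proof.
  intros Hxy Hz Hnz E. apply Hnz.
  pose proof (vsub_neq0 y x (not_eq_sym Hxy)) as Hd.
  destruct (cross_eq0_scal (vsub z x) (vsub y x)) as [s Hs]; auto.
  { replace (cross (vsub z x) (vsub y x)) with (- cross (vsub z x) (vsub z y))
      by (unfold cross, vsub; simpl; ring).
    rewrite E; ring. }
  apply vsub_eq_vadd in Hs; subst z.
  unfold bis in Hz.
  replace (vsub (vadd x (vscal s (vsub y x))) y) with (vscal (s + -1) (vsub y x)) in Hz
    by vec_eq.
  replace (vsub (vadd x (vscal s (vsub y x))) x) with (vscal s (vsub y x)) in Hz by vec_eq.
  apply norm_scal_inj, Rabs_eq_shift in Hz; auto; try lra.
  exists s; split; [lra | reflexivity].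
Qed.

Lemma bis_coords_same_sign (x y z w : V) (al be : R) :
  x <> y -> ~ parallel_to_seg_in_S N x y -> bis N x y z -> bis N x y w ->
  w = vadd z (vadd (vscal al (vsub z x)) (vscal be (vsub z y))) ->
  (al <= 0 /\ be <= 0) \/ (0 <= al /\ 0 <= be).
Proof.
  intros Hxy HnP Hz Hw Hdec. unfold bis in Hz, Hw.
  assert (Hal : ~ (al < 0 < be)).
  { intros Hs; apply HnP.
    apply (mixed_coords_parallel x y (vsub z x) (vsub z y) (-1) (- al) be); try lra.
    - vec_eq.
    - replace (vsub (vsub z y) (vsub z x)) with (vsub x y) by vec_eq. apply vsub_neq0; auto.
    - replace (vadd (vscal (1 - - al) (vsub z x)) (vscal be (vsub z y))) with (vsub w x)
        by (rewrite Hdec; vec_eq).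
      replace (vadd (vscal (- - al) (vsub z x)) (vscal (1 + be) (vsub z y))) with (vsub w y)
        by (rewrite Hdec; vec_eq).
      exact Hw. }
  assert (Hbe : ~ (be < 0 < al)).
  { intros Hs; apply HnP.
    apply (mixed_coords_parallel x y (vsub z y) (vsub z x) 1 (- be) al); try lra.
    - vec_eq.
    - replace (vsub (vsub z x) (vsub z y)) with (vsub y x) by vec_eq. apply vsub_neq0; auto.
    - replace (vadd (vscal (1 - - be) (vsub z y)) (vscal al (vsub z x))) with (vsub w y)
        by (rewrite Hdec; vec_eq).
      replace (vadd (vscal (- - be) (vsub z y)) (vscal (1 + al) (vsub z x))) with (vsub w x)
        by (rewrite Hdec; vec_eq).
      symmetry; exact Hw. }
  destruct (Rle_or_lt al 0), (Rle_or_lt be 0); [left | right | right | right]; lra.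
Qed.

Lemma not_parallel_bisector_in_cones (x y : V) : x <> y ->
  ~ parallel_to_seg_in_S N x y ->
  forall z : V, bis N x y z -> ~ segment x y z ->
    forall w : V, bis N x y w -> Cz x y z w \/ reflCz x y z w.
Proof.
  intros Hxy HnP z Hz Hnz w Hw.
  pose proof (bis_cross_neq0 x y z Hxy Hz Hnz) as HD.
  pose proof (cross_coords (vsub z x) (vsub z y) z w HD) as Hdec.
  destruct (bis_coords_same_sign x y z w _ _ Hxy HnP Hz Hw Hdec).
  - left; apply (Cz_iff_coords_nonpos x y z w _ _ HD Hdec); auto.
  - right; apply (reflCz_iff_coords_nonneg x y z w _ _ HD Hdec); auto.
Qed.

Lemma unit_chord_cross_neq0 (u d : V) (l : R) : d <> vzero -> l <> 0 ->
  N (vadd u (vscal (0 * l) d)) = 1 -> N (vadd u (vscal (1 / 2 * l) d)) = 1 ->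
  N (vadd u (vscal (1 * l) d)) = 1 -> cross u d <> 0.
Proof.
  intros Hd Hl Nu Nm Nv E. destruct (cross_eq0_scal u d Hd E) as [k ->].
  assert (Hk : k = - l / 2).
  { apply Rabs_eq_shift, (norm_scal_inj k (k + l) d); auto.
    replace (vadd (vscal k d) (vscal (0 * l) d)) with (vscal k d) in Nu by vec_eq.
    replace (vadd (vscal k d) (vscal (1 * l) d)) with (vscal (k + l) d) in Nv by vec_eq.
    lra. }
  replace (vadd (vscal k d) (vscal (1 / 2 * l) d)) with (vscal 0 d) in Nm by (subst k; vec_eq).
  rewrite norm_scal, Rabs_R0 in Nm. lra.
Qed.

(* For [v = u + l d] with [d = y - x], the points [z = x + c u] and [w = z - d],
   [c = -2/l], satisfy [z - x = c u], [z - y = w - x = c (u + l/2 d)] and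
   [w - y = c v], all of norm [|c|]. *)
Lemma parallel_bisector_escapes_cones (x y : V) : x <> y ->
  parallel_to_seg_in_S N x y ->
  exists z w, bis N x y z /\ ~ segment x y z /\ bis N x y w /\
              ~ Cz x y z w /\ ~ reflCz x y z w.
Proof.
  intros Hxy [u [v [Huv [Hseg [l Hl]]]]].
  apply vsub_eq_vadd in Hl; subst v.
  pose proof (vsub_neq0 y x (not_eq_sym Hxy)) as Hd.
  assert (Hl0 : l <> 0) by (intros ->; apply Huv; vec_eq).
  assert (Hon : forall t, 0 <= t <= 1 -> N (vadd u (vscal (t * l) (vsub y x))) = 1).
  { intros t Ht; apply Hseg; exists t; split; auto; vec_eq. }
  pose proof (Hon 0 ltac:(lra)) as Nu. pose proof (Hon (1 / 2) ltac:(lra)) as Nm.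
  pose proof (Hon 1 ltac:(lra)) as Nv.
  pose proof (unit_chord_cross_neq0 u (vsub y x) l Hd Hl0 Nu Nm Nv) as Hu.
  set (c := -2 / l). set (z := vadd x (vscal c u)).
  assert (HD : cross (vsub z x) (vsub z y) <> 0).
  { replace (cross (vsub z x) (vsub z y)) with (- c * cross u (vsub y x))
      by (subst z; unfold cross, vadd, vscal, vsub; simpl; ring).
    apply Rmult_integral_contrapositive; split; auto.
    unfold c, Rdiv. apply Ropp_neq_0_compat, Rmult_integral_contrapositive.
    split; [lra | apply Rinv_neq_0_compat; auto]. }
  assert (Hw : vadd z (vsub x y) =
               vadd z (vadd (vscal (-1) (vsub z x)) (vscal 1 (vsub z y)))) by vec_eq.
  exists z, (vadd z (vsub x y)). repeat split.
  - unfold bis.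
    replace (vsub z x) with (vscal c (vadd u (vscal (0 * l) (vsub y x)))) by (subst z; vec_eq).
    replace (vsub z y) with (vscal c (vadd u (vscal (1 / 2 * l) (vsub y x))))
      by (subst z c; vec_eq).
    rewrite !norm_scal, Nu, Nm; reflexivity.
  - intros Hs; apply HD, segment_cross; auto.
  - unfold bis.
    replace (vsub (vadd z (vsub x y)) x) with (vscal c (vadd u (vscal (1 / 2 * l) (vsub y x))))
      by (subst z c; vec_eq).
    replace (vsub (vadd z (vsub x y)) y) with (vscal c (vadd u (vscal (1 * l) (vsub y x))))
      by (subst z c; vec_eq).
    rewrite !norm_scal, Nm, Nv; reflexivity.
  - intros HC; apply (Cz_iff_coords_nonpos x y z _ _ _ HD Hw) in HC; lra.
  - intros HC; apply (reflCz_iff_coords_nonneg x y z _ _ _ HD Hw) in HC; lra.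
Qed.

End Norm.

Theorem lemma2p1 (N : V -> R) (HN : is_norm N) (x y : V) (Hxy : x <> y) :
  ~ parallel_to_seg_in_S N x y <->
  (forall z : V, bis N x y z -> ~ segment x y z ->
     forall w : V, bis N x y w -> Cz x y z w \/ reflCz x y z w).
Proof.
  split.
  - apply not_parallel_bisector_in_cones; auto.
  - intros Hcones HP.
    destruct (parallel_bisector_escapes_cones N HN x y Hxy HP)
      as [z [w [Hz [Hnz [Hw [HnC HnR]]]]]].
    destruct (Hcones z Hz Hnz w Hw); contradiction.
Qed.
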